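(* Let $p\ge 4$ be an integer and let $(a_n)_{n\ge0}$ be the sequence defined by $a_0=0$, $a_1=1$, $a_2=p-1$ and $a_{n+3}=(p-1)a_{n+2}-(p-1)a_{n+1}+a_n$ for $n\ge 0$. Set $\beta_n=2(a_n+a_{n-1})-1$. Then for every $n\ge 1$, \[ \frac{(a_n+a_{n-1})^2}{p}-\frac{a_n+a_{n-1}}{p}=a_na_{n-1} \qquad\text{and}\qquad \beta_n^2=4p\,a_na_{n-1}+1. \] *)

From mathcomp Require Import all_boot all_order all_algebra.
Set Implicit Arguments. Unset Strict Implicit. Unset Printing Implicit Defensive.
Import GRing.Theory Num.Theory.
Local Open Scope ring_scope.

Fixpoint seq_a (p : int) (n : nat) {struct n} : int :=
  match n with
  | 0 => 0
  | S n1 =>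
    match n1 with
    | 0 => 1
    | S n2 =>
      match n2 with
      | 0 => p - 1
      | S m => (p - 1) * seq_a p n1 - (p - 1) * seq_a p n2 + seq_a p m
      end
    end
  end.

Definition beta (p : int) (n : nat) : int :=
  2 * (seq_a p n + seq_a p n.-1) - 1.

From mathcomp Require Import all_boot all_order all_algebra.
From mathcomp Require Import ring.
Import GRing.Theory Num.Theory.
Local Open Scope ring_scope.

(* The third-order recurrence collapses to the second-order one
   a_{n+2} = (p - 2) a_{n+1} - a_n + 1, and the quadratic form
   (x + y)^2 - (x + y) - p x y is invariant under the step
   (x, y) |-> ((p - 2) x - y + 1, x) it induces; at (a_1, a_0) = (1, 0) it
   vanishes.  Both identities are rewritings of the resulting
   (a_n + a_{n-1})^2 - (a_n + a_{n-1}) = p a_n a_{n-1}. *)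

Lemma seq_a_rec2 (p : int) (n : nat) :
  seq_a p n.+2 = (p - 2) * seq_a p n.+1 - seq_a p n + 1.
Proof.
elim: n => [|n IH]; first by rewrite /=; ring.
have -> : seq_a p n.+3 =
  (p - 1) * seq_a p n.+2 - (p - 1) * seq_a p n.+1 + seq_a p n by [].
rewrite IH; ring.
Qed.

Lemma seq_a_sum_sqr (p : int) (n : nat) :
  (seq_a p n.+1 + seq_a p n) ^+ 2 - (seq_a p n.+1 + seq_a p n)
    = p * (seq_a p n.+1 * seq_a p n).
Proof.
elim: n => [|n IH]; first by rewrite /=; ring.
rewrite seq_a_rec2; apply/eqP; rewrite -subr_eq0.
by rewrite -(subrr (p * (seq_a p n.+1 * seq_a p n))) -{1}IH; apply/eqP; ring.
Qed.

Lemma beta_sqr (p : int) (n : nat) :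
  beta p n.+1 ^+ 2 = 4 * p * seq_a p n.+1 * seq_a p n + 1.
Proof.
rewrite /beta /= -!mulrA -seq_a_sum_sqr; ring.
Qed.

Theorem lemma3p13 (p : nat) (hp : (4 <= p)%N) (n : nat) (hn : (1 <= n)%N) :
  let a_n := seq_a (p%:Z) n in
  let a_n1 := seq_a (p%:Z) n.-1 in
  ((a_n + a_n1) ^+ 2)%:~R / (p%:R : rat) - (a_n + a_n1)%:~R / (p%:R : rat)
    = (a_n * a_n1)%:~R
  /\ beta (p%:Z) n ^+ 2 = 4 * p%:Z * a_n * a_n1 + 1.
Proof.
case: n hn => [//|m] _ /=; split; last exact: beta_sqr.
have p_neq0 : (p%:R : rat) != 0 by rewrite pnatr_eq0 -lt0n; apply: leq_trans hp.
rewrite -mulrBl -rmorphB /= seq_a_sum_sqr rmorphM /=.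
by rewrite mulrAC divff // mul1r.
Qed.
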